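(* Let $z_1,\dots,z_{\ell+1}$ be the generators of the $*$-algebra $\mathcal{A}(S^{2\ell+1}_q)$. Then for every $N\in\mathbb{N}$, $$\sum_{j_1+\dots+j_{\ell+1}=N}[j_1,\dots,j_{\ell+1}]!\;z_1^{j_1}\cdots z_{\ell+1}^{j_{\ell+1}}\big(z_1^{j_1}\cdots z_{\ell+1}^{j_{\ell+1}}\big)^*=1,$$ the sum running over $(j_1,\dots,j_{\ell+1})\in\mathbb{N}^{\ell+1}$.
   Context: $0<q<1$, $\ell\ge1$, $[x]=\frac{q^x-q^{-x}}{q-q^{-1}}$, $[n]!=[n]\cdots[1]$, $[0]!=1$, and $[j_1,\dots,j_{\ell+1}]!:=\frac{[j_1+\dots+j_{\ell+1}]!}{[j_1]!\cdots[j_{\ell+1}]!}q^{-\sum_{r<s}j_rj_s}$. $\mathcal{A}(S^{2\ell+1}_q)$ is the $*$-algebra generated by $z_i,z_i^*$ ($1\le i\le\ell+1$) with relations $z_iz_j=qz_jz_i$ ($i<j$), $z_i^*z_j=qz_jz_i^*$ ($i\ne j$), $[z_1^*,z_1]=0$, $[z_{i+1}^*,z_{i+1}]=(1-q^2)\sum_{j=1}^iz_jz_j^*$ ($1\le i\le\ell$), and $\sum_{i=1}^{\ell+1}z_iz_i^*=1$. *)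

From HB Require Import structures.
From mathcomp Require Import all_boot all_order all_algebra.
Set Implicit Arguments. Unset Strict Implicit. Unset Printing Implicit Defensive.
Import Order.TTheory GRing.Theory Num.Theory.
Local Open Scope ring_scope.

Definition qnum (R : fieldType) (q : R) (n : nat) : R :=
  (q ^+ n - q ^- n) / (q - q^-1).

Definition qfact (R : fieldType) (q : R) (n : nat) : R :=
  \prod_(1 <= k < n.+1) qnum q k.

Definition qmultinom (R : fieldType) (q : R) (m : nat) (j : 'I_m -> nat) : R :=
  qfact q (\sum_(r < m) j r) / (\prod_(r < m) qfact q (j r))
  * q ^- (\sum_(r < m) \sum_(s < m | (r < s)%N) (j r * j s))%N.

Definition is_star (R : fieldType) (A : algType R) (star : A -> A) : Prop :=
  [/\ forall x y, star (x + y) = star x + star y,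
      forall (c : R) x, star (c *: x) = c *: star x,
      forall x y, star (x * y) = star y * star x,
      star 1 = 1 &
      forall x, star (star x) = x].

(* The defining relations of A(S^{2l+1}_q), generators indexed by 'I_(l+1),
   0-based: z_{i+1} of the paper is z i. *)
Definition qsphere_rel (R : fieldType) (q : R) (l : nat) (A : algType R)
    (star : A -> A) (z : 'I_l.+1 -> A) : Prop :=
  [/\ forall i j : 'I_l.+1, (i < j)%N -> z i * z j = q *: (z j * z i),
      forall i j : 'I_l.+1, i != j -> star (z i) * z j = q *: (z j * star (z i)),
      star (z ord0) * z ord0 - z ord0 * star (z ord0) = 0,
      forall k : 'I_l.+1, (0 < k)%N ->
        star (z k) * z k - z k * star (z k)
        = (1 - q ^+ 2) *: \sum_(j < l.+1 | (j < k)%N) z j * star (z j) &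
      \sum_(i < l.+1) z i * star (z i) = 1].

Definition zmon (R : fieldType) (l : nat) (A : algType R)
    (z : 'I_l.+1 -> A) (j : 'I_l.+1 -> nat) : A :=
  \prod_(i < l.+1) z i ^+ j i.

From HB Require Import structures.
From mathcomp Require Import all_boot all_order all_algebra.
From mathcomp Require Import ring zify.
Import Order.TTheory GRing.Theory Num.Theory.
Set Implicit Arguments. Unset Strict Implicit. Unset Printing Implicit Defensive.
Local Open Scope ring_scope.

(** Write [W_j = z^j (z^j)^*] and [S_N = \sum_(|j| = N) [j]! W_j].  Inserting
    [1 = \sum_i z_i z_i^*] between [z^j] and its adjoint and moving [z_i] to
    its place past the [z_k], [k > i], gives [z^j z_i = q^(-R_i j) z^(j + e_i)]
    with [R_i j = \sum_(k > i) j_k], hence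
    [W_j = \sum_i q^(-2 R_i j) W_(j + e_i)].  Dually, the q-multinomials obey
    the Pascal rule [[m]! = \sum_(i, m_i > 0) q^(-2 R_i m) [m - e_i]!], which
    follows from the telescoping identity
    [[m_1 + ... + m_n] = \sum_i [m_i] q^(m_1 + ... + m_(i-1)) q^-(m_(i+1) + ... + m_n)].
    Collecting terms gives [S_N = S_(N+1)], and [S_0 = 1]. *)

Section MultiIndex.
Variable n : nat.
Implicit Types (f g : 'I_n -> nat) (i : 'I_n).

Definition incr_at f i : 'I_n -> nat := fun k => (f k + (k == i))%N.
Definition decr_at f i : 'I_n -> nat := fun k => (f k - (k == i))%N.

Definition cross_sum f : nat :=
  \sum_(r < n) \sum_(s < n | (r < s)%N) (f r * f s).

Lemma eq_cross_sum f g : f =1 g -> cross_sum f = cross_sum g.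
Proof.
by move=> fg; apply: eq_bigr => r _; apply: eq_bigr => s _; rewrite !fg.
Qed.

Lemma leq_term_sum f i : (f i <= \sum_(k < n) f k)%N.
Proof. by rewrite (bigD1 i) //= leq_addr. Qed.

Lemma sum_delta_mul i f : (\sum_(k < n) ((k == i) * f k) = f i)%N.
Proof.
rewrite (bigD1 i) //= eqxx mul1n big1 ?addn0 // => k /negbTE ->.
by rewrite mul0n.
Qed.

Lemma sum_delta_cond i (P : pred 'I_n) : (\sum_(k < n | P k) (k == i) = P i)%N.
Proof.
rewrite big_mkcond (bigD1 i) //= eqxx big1 ?addn0; first by case: (P i).
by move=> k /negbTE ->; case: (P k).
Qed.

Lemma sum_incr_at f i : (\sum_(k < n) incr_at f i k = (\sum_(k < n) f k).+1)%N.
Proof. by rewrite big_split /= (sum_delta_cond i predT) addn1. Qed.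

Lemma sum_cond_incr_at f i (P : pred 'I_n) : ~~ P i ->
  (\sum_(k < n | P k) incr_at f i k = \sum_(k < n | P k) f k)%N.
Proof.
move=> Pi; apply: eq_bigr => k Pk; rewrite /incr_at.
by case: eqP => [ki|]; [move: Pi; rewrite -ki Pk | rewrite addn0].
Qed.

Lemma incr_decr_at f i : (0 < f i)%N -> incr_at (decr_at f i) i =1 f.
Proof. by move=> fi k; rewrite /incr_at /decr_at; case: eqP => [->|]; lia. Qed.

Lemma decr_incr_at f i : decr_at (incr_at f i) i =1 f.
Proof. by move=> k; rewrite /incr_at /decr_at addnK. Qed.

Lemma cross_sum_incr_at f i :
  cross_sum (incr_at f i)
  = (cross_sum f + \sum_(k < n | (k < i)%N) f k + \sum_(k < n | (i < k)%N) f k)%N.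
Proof.
have row (r : 'I_n) : (\sum_(s < n | (r < s)%N) (incr_at f i r * incr_at f i s)
  = \sum_(s < n | (r < s)%N) (f r * f s) + (r == i) * \sum_(s < n | (r < s)%N) f s
    + f r * (r < i) + (r == i) * (r < i))%N.
  under eq_bigr => s _ do rewrite /incr_at mulnDl !mulnDr.
  rewrite !big_split /= -!big_distrr /= !sum_delta_cond; lia.
rewrite /cross_sum (eq_bigr _ (fun r _ => row r)) !big_split /=.
rewrite !sum_delta_mul ltnn addn0 -!addnA; congr (_ + _)%N; rewrite addnC.
congr (_ + _)%N; rewrite [RHS]big_mkcond; apply: eq_bigr => k _.
by case: (k < i)%N; rewrite ?muln1 ?muln0.
Qed.

End MultiIndex.

Lemma subrX_telescope (R : comNzRingType) (a b : R) n (f : 'I_n -> nat) :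
  a ^+ (\sum_(k < n) f k) - b ^+ (\sum_(k < n) f k) =
  \sum_(i < n) (a ^+ f i - b ^+ f i) *
    (a ^+ (\sum_(k < n | (k < i)%N) f k) * b ^+ (\sum_(k < n | (i < k)%N) f k)).
Proof.
elim: n f => [|n IH] f; first by rewrite !big_ord0 subrr.
set f' := fun k : 'I_n => f (widen_ord (leqnSn n) k).
have below (i : 'I_n) :
    (\sum_(k < n.+1 | (k < i)%N) f k = \sum_(k < n | (k < i)%N) f' k)%N.
  by rewrite big_mkcond big_ord_recr /= ltnNge ltnW //= addn0 -big_mkcond.
have above (i : 'I_n) : (\sum_(k < n.+1 | (i < k)%N) f k
    = \sum_(k < n | (i < k)%N) f' k + f ord_max)%N.
  by rewrite big_mkcond big_ord_recr /= ltn_ord -big_mkcond.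
have below_last : (\sum_(k < n.+1 | (k < n)%N) f k = \sum_(k < n) f' k)%N.
  rewrite big_mkcond big_ord_recr /= ltnn addn0.
  by apply: eq_bigr => k _; rewrite /= ltn_ord.
have above_last : (\sum_(k < n.+1 | (n < k)%N) f k = 0)%N.
  by rewrite big1 // => k; rewrite ltnNge -ltnS ltn_ord.
rewrite [\sum_(i < n.+1) (_ * _)]big_ord_recr /= !big_ord_recr /=.
under [\sum_(i < n) (_ * _)]eq_bigr => i _ do
  rewrite below above exprD mulrA mulrA.
rewrite below_last above_last expr0 mulr1 -big_distrl /=.
have := IH f'; under [\sum_(i < n) (_ * _)]eq_bigr => i _ do rewrite mulrA.
move=> <-; rewrite -/f' !exprD; ring.
Qed.

Section QNumbers.
Variables (R : fieldType) (q : R).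

Lemma qnum_big n (f : 'I_n -> nat) :
  qnum q (\sum_(k < n) f k)%N = \sum_(i < n) qnum q (f i) *
    (q ^+ (\sum_(k < n | (k < i)%N) f k) * q ^- (\sum_(k < n | (i < k)%N) f k)).
Proof.
rewrite /qnum -!exprVn subrX_telescope mulr_suml; apply: eq_bigr => i _.
by rewrite -!exprVn mulrAC.
Qed.

Lemma qfactS k : qfact q k.+1 = qnum q k.+1 * qfact q k.
Proof. by rewrite /qfact big_nat_recr //= mulrC. Qed.

Lemma qfact0 : qfact q 0 = 1.
Proof. by rewrite /qfact big_geq. Qed.

Lemma qnum0 : qnum q 0 = 0.
Proof. by rewrite /qnum expr0 invr1 subrr mul0r. Qed.

Lemma eq_qmultinom n (f g : 'I_n -> nat) : f =1 g -> qmultinom q f = qmultinom q g.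
Proof.
move=> fg; rewrite /qmultinom -/(cross_sum f) -/(cross_sum g) (eq_cross_sum fg).
rewrite (eq_bigr _ (fun k _ => fg k)).
by rewrite (eq_bigr _ (fun k _ => congr1 (qfact q) (fg k))).
Qed.

End QNumbers.

Section QMultinomialRec.
Variables (R : realFieldType) (q : R).
Hypotheses (q_gt0 : 0 < q) (q_lt1 : q < 1).

Lemma qnum_neq0 k : (0 < k)%N -> qnum q k != 0.
Proof.
have qsub_neq0 m : (0 < m)%N -> q ^+ m - q ^- m != 0.
  move=> m_gt0; have qX_lt1 : q ^+ m < 1 by rewrite exprn_ilt1 ?ltW // -lt0n.
  by rewrite subr_eq0 lt_eqF // (lt_trans qX_lt1) // invf_gt1 ?exprn_gt0.
move=> k_gt0; rewrite /qnum mulf_neq0 ?invr_neq0 ?qsub_neq0 //.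
by have := qsub_neq0 1%N isT; rewrite expr1.
Qed.

Lemma qfact_neq0 k : qfact q k != 0.
Proof.
by elim: k => [|k IH]; rewrite ?qfact0 ?oner_neq0 // qfactS mulf_neq0 ?qnum_neq0.
Qed.

(* The [i]-th term of [[m]!] expanded by [qnum_big], for [m = g + e_i]. *)
Lemma qmultinom_incr_at n (g : 'I_n -> nat) (i : 'I_n) :
  qnum q (incr_at g i i) * (q ^+ (\sum_(k < n | (k < i)%N) g k)
                            * q ^- (\sum_(k < n | (i < k)%N) g k))
    * (qfact q (\sum_(k < n) g k) / \prod_(k < n) qfact q (incr_at g i k))
    * q ^- cross_sum (incr_at g i)
  = qmultinom q g * (q ^- (\sum_(k < n | (i < k)%N) g k)
                     * q ^- (\sum_(k < n | (i < k)%N) g k)).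
Proof.
rewrite cross_sum_incr_at /qmultinom -/(cross_sum g).
have -> : \prod_(k < n) qfact q (incr_at g i k)
    = qnum q (incr_at g i i) * \prod_(k < n) qfact q (g k).
  rewrite (bigD1 i) //= [in RHS](bigD1 i) //= mulrA /incr_at eqxx addn1 qfactS.
  by congr (_ * _); apply: eq_bigr => k /negbTE ki; rewrite ki addn0.
have qX_neq0 m : q ^+ m != 0 by rewrite expf_neq0 // gt_eqF.
have nz_num := qnum_neq0 (ltn0Sn (g i)).
have nz_prod : \prod_(k < n) qfact q (g k) != 0.
  by apply/prodf_neq0 => k _; rewrite qfact_neq0.
rewrite /incr_at eqxx addn1 in nz_num *.
move: nz_num nz_prod; set a := qnum q _; set P := \prod_(k < n) _.
set F := qfact q _; set L := (\sum_(k < n | _) _)%N; set Rs := (\sum_(k < n | _) _)%N.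
set C := cross_sum g; move=> nz_num nz_prod; clearbody a P F L Rs C.
by rewrite !exprD !invfM; field; rewrite !qX_neq0 nz_num nz_prod.
Qed.

Lemma qmultinom_rec n (f : 'I_n -> nat) : (0 < \sum_(k < n) f k)%N ->
  qmultinom q f = \sum_(i < n | (0 < f i)%N)
    qmultinom q (decr_at f i) *
      (q ^- (\sum_(k < n | (i < k)%N) f k) * q ^- (\sum_(k < n | (i < k)%N) f k)).
Proof.
move=> sum_gt0.
have qfact_sum : qfact q (\sum_(k < n) f k)%N
    = qnum q (\sum_(k < n) f k)%N * qfact q (\sum_(k < n) f k)%N.-1.
  by rewrite -{1}(prednK sum_gt0) qfactS prednK.
rewrite {1}/qmultinom -/(cross_sum f) qfact_sum qnum_big !mulr_suml [RHS]big_mkcond.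
apply: eq_bigr => i _; case: (posnP (f i)) => [->|fi_gt0] /=.
  by rewrite qnum0 !mul0r.
set g := decr_at f i.
have gf : incr_at g i =1 f := incr_decr_at fi_gt0.
have sum_g : (\sum_(k < n) f k)%N.-1 = (\sum_(k < n) g k)%N.
  by rewrite -(eq_bigr _ (fun k _ => gf k)) sum_incr_at.
have sum_off_i P : ~~ P i -> (\sum_(k < n | P k) f k = \sum_(k < n | P k) g k)%N.
  by move=> Pi; rewrite -(eq_bigr _ (fun k _ => gf k)) sum_cond_incr_at.
rewrite sum_g (sum_off_i (fun k => k < i)%N) ?ltnn //.
rewrite (sum_off_i (fun k => i < k)%N) ?ltnn //.
rewrite -(gf i) (eq_cross_sum (fun k => esym (gf k))).
rewrite (eq_bigr _ (fun k _ => congr1 (qfact q) (esym (gf k)))).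
by rewrite -qmultinom_incr_at !mulrA.
Qed.

End QMultinomialRec.

Section QCommuting.
Variables (R : comNzRingType) (A : algType R).

Lemma qcommrX (c : R) (x y : A) :
  x * y = c *: (y * x) -> forall a, x ^+ a * y = c ^+ a *: (y * x ^+ a).
Proof.
move=> xy; elim=> [|a IH]; first by rewrite !expr0 scale1r mul1r mulr1.
rewrite exprSr -mulrA xy -scalerAr (mulrA (x ^+ a)) IH -scalerAl scalerA -exprS.
by rewrite mulrA.
Qed.

Lemma prodX_mulr_qcomm n (y : 'I_n -> A) (c : R) (f : 'I_n -> nat) (i : 'I_n) :
  (forall a b : 'I_n, (a < b)%N -> y b * y a = c *: (y a * y b)) ->
  (\prod_(k < n) y k ^+ f k) * y i
    = c ^+ (\sum_(k < n | (i < k)%N) f k) *: \prod_(k < n) y k ^+ incr_at f i k.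
Proof.
elim: n y f i => [|n IH] y f i y_qcomm; first by case: i.
rewrite /incr_at !big_ord_recr /=.
have [->|i_neq_max] := eqVneq i ord_max.
  rewrite [\sum_(_ < _ | _) _]big1 ?expr0 ?scale1r; last first.
    by move=> k; rewrite ltnNge -ltnS ltn_ord.
  rewrite addn1 exprSr mulrA; congr (_ * _ * _).
  apply: eq_bigr => k _; congr (_ ^+ _); rewrite -[LHS]addn0; congr (_ + _).
  by apply/esym/eqP; rewrite eqb0 -val_eqE /= neq_ltn ltn_ord.
have i_lt : (i < n)%N.
  by rewrite ltn_neqAle -ltnS ltn_ord andbT; move: i_neq_max; rewrite -val_eqE.
pose i' : 'I_n := Ordinal i_lt.
have -> : i = widen_ord (leqnSn n) i' by apply: val_inj.
rewrite [\sum_(_ < _ | _) _]big_mkcond /= [\sum_(_ < _) _]big_ord_recr /= i_lt.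
rewrite -mulrA (qcommrX (y_qcomm (widen_ord (leqnSn n) i') ord_max _)) //.
rewrite -scalerAr mulrA.
rewrite (IH (fun k => y (widen_ord (leqnSn n) k)) (fun k => f (widen_ord _ k)) i');
  last by move=> a b ab; apply: y_qcomm.
rewrite -scalerAl scalerA -exprD addnC -big_mkcond /= addn0.
by congr (_ ^+ _ *: (_ * _)).
Qed.

End QCommuting.

Lemma mul_star_scale (R : fieldType) (A : algType R) (star : A -> A)
    (W x W' : A) (c : R) :
  is_star star -> W * x = c *: W' ->
  W * (x * star x) * star W = (c * c) *: (W' * star W').
Proof.
case=> _ starZ starM _ _ Wx.
by rewrite mulrA -mulrA -starM Wx starZ -scalerAl -scalerAr scalerA.
Qed.

Section Monomials.
Variables (R : fieldType) (q : R) (l : nat) (A : algType R) (star : A -> A).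
Variable z : 'I_l.+1 -> A.
Hypotheses (q_neq0 : q != 0) (star_is : is_star star).
Hypothesis z_qcomm : forall i j : 'I_l.+1, (i < j)%N -> z i * z j = q *: (z j * z i).
Hypothesis sum_zzstar : \sum_(i < l.+1) z i * star (z i) = 1.

Lemma eq_zmon (f g : 'I_l.+1 -> nat) : f =1 g -> zmon z f = zmon z g.
Proof. by move=> fg; apply: eq_bigr => k _; rewrite fg. Qed.

Lemma zmon_mulr (f : 'I_l.+1 -> nat) (i : 'I_l.+1) :
  zmon z f * z i = q ^- (\sum_(k < l.+1 | (i < k)%N) f k) *: zmon z (incr_at f i).
Proof.
rewrite /zmon -exprVn (@prodX_mulr_qcomm _ _ _ _ q^-1) // => a b ab.
by rewrite (z_qcomm ab) scalerA mulVf // scale1r.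
Qed.

Lemma zmon_star_expand (f : 'I_l.+1 -> nat) :
  zmon z f * star (zmon z f) = \sum_(i < l.+1)
    (q ^- (\sum_(k < l.+1 | (i < k)%N) f k) * q ^- (\sum_(k < l.+1 | (i < k)%N) f k))
      *: (zmon z (incr_at f i) * star (zmon z (incr_at f i))).
Proof.
rewrite -{1}[zmon z f]mulr1 -sum_zzstar mulr_sumr mulr_suml.
by apply: eq_bigr => i _; apply: mul_star_scale => //; apply: zmon_mulr.
Qed.

End Monomials.

Section BoundedMultiIndex.
Variables n M : nat.
Implicit Types (j : {ffun 'I_n -> 'I_M.+1}) (i : 'I_n).

(* [inord] truncates to [0] out of range, so [ffun_incr j i] is meaningful only
   when [j i < M]. *)
Definition ffun_incr j i : {ffun 'I_n -> 'I_M.+1} :=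
  [ffun k => inord (incr_at (fun k => j k : nat) i k)].
Definition ffun_decr j i : {ffun 'I_n -> 'I_M.+1} :=
  [ffun k => inord (decr_at (fun k => j k : nat) i k)].

Lemma ffun_incrE j i : (j i < M)%N ->
  forall k, (ffun_incr j i k : nat) = incr_at (fun k => j k : nat) i k.
Proof.
move=> ji_lt k; rewrite ffunE inordK // /incr_at.
by case: eqP => [->|_]; rewrite ?addn1 ?addn0.
Qed.

Lemma ffun_decrE j i k : (ffun_decr j i k : nat) = decr_at (fun k => j k : nat) i k.
Proof. by rewrite ffunE inordK // ltnS (leq_trans (leq_subr _ _)) // -ltnS. Qed.

Lemma ffun_incrK j i : (0 < j i)%N -> ffun_incr (ffun_decr j i) i = j.
Proof.
move=> ji_gt0; have dec_lt : (ffun_decr j i i < M)%N.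
  by rewrite ffun_decrE /decr_at eqxx; have := ltn_ord (j i); lia.
apply/ffunP => k; apply: val_inj; rewrite /= ffun_incrE //.
rewrite /incr_at ffun_decrE -/(incr_at _ i k); exact: incr_decr_at.
Qed.

Lemma ffun_decrK j i : (j i < M)%N -> ffun_decr (ffun_incr j i) i = j.
Proof.
move=> ji_lt; apply/ffunP => k; apply: val_inj.
by rewrite /= ffun_decrE /decr_at ffun_incrE // -/(decr_at _ i k) decr_incr_at.
Qed.

Lemma sum_ffun_incr (V : zmodType) (N : nat) i (F : {ffun 'I_n -> 'I_M.+1} -> V) :
  (N < M)%N ->
  \sum_(m : {ffun 'I_n -> 'I_M.+1} |
          ((\sum_(k < n) (m k : nat))%N == N.+1) && (0 < m i)%N) F m
  = \sum_(j : {ffun 'I_n -> 'I_M.+1} | (\sum_(k < n) (j k : nat))%N == N)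
      F (ffun_incr j i).
Proof.
move=> NM; rewrite (reindex_onto (ffun_incr^~ i) (ffun_decr^~ i)); last first.
  by move=> m /andP[_]; apply: ffun_incrK.
apply: eq_bigl => j; case: (ltnP (j i) M) => [ji_lt|ji_ge].
  rewrite ffun_decrK // eqxx andbT (eq_bigr _ (fun k _ => ffun_incrE ji_lt k)).
  by rewrite sum_incr_at eqSS ffun_incrE // /incr_at eqxx addn1 andbT.
have -> : (ffun_incr j i i : nat) = 0%N.
  by rewrite ffunE /incr_at eqxx addn1 /inord val_insubd ltnNge ltnS ji_ge.
rewrite ltnn andbF; apply/esym/negbTE/eqP => j_sum.
have := leq_term_sum (fun k => j k : nat) i; rewrite /= j_sum => ji_le.
by have := leq_trans ji_ge ji_le; rewrite leqNgt NM.
Qed.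

End BoundedMultiIndex.

Definition sphere_sum (R : fieldType) (q : R) (l : nat) (A : algType R)
    (star : A -> A) (z : 'I_l.+1 -> A) (M N : nat) : A :=
  \sum_(j : {ffun 'I_l.+1 -> 'I_M.+1} | (\sum_(i < l.+1) (j i : nat))%N == N)
     qmultinom q (fun i => (j i : nat)) *:
       (zmon z (fun i => (j i : nat)) * star (zmon z (fun i => (j i : nat)))).

Section SphereSum.
Variables (R : realFieldType) (q : R) (l : nat) (A : algType R) (star : A -> A).
Variable z : 'I_l.+1 -> A.
Hypotheses (q_gt0 : 0 < q) (q_lt1 : q < 1) (star_is : is_star star).
Hypothesis z_qcomm : forall i j : 'I_l.+1, (i < j)%N -> z i * z j = q *: (z j * z i).
Hypothesis sum_zzstar : \sum_(i < l.+1) z i * star (z i) = 1.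

Lemma sphere_sum0 M : sphere_sum q star z M 0 = 1.
Proof.
rewrite /sphere_sum (bigD1 [ffun=> ord0]) /=; last first.
  by rewrite big1 // => k _; rewrite ffunE.
rewrite big1 ?addr0; last first.
  move=> j /andP[/eqP j_sum /eqP j_neq0]; exfalso; apply: j_neq0; apply/ffunP => k.
  rewrite ffunE; apply: val_inj => /=.
  by have := leq_term_sum (fun k => j k : nat) k; rewrite j_sum; lia.
have val0 :
    (fun k => ([ffun=> ord0] : {ffun 'I_l.+1 -> 'I_M.+1}) k : nat) =1 (fun=> 0%N).
  by move=> k; rewrite ffunE.
rewrite (eq_qmultinom q val0) (eq_zmon z val0).
have -> : zmon z (fun=> 0%N) = 1 by rewrite /zmon big1 // => k _; rewrite expr0.
have -> : qmultinom q (fun _ : 'I_l.+1 => 0%N) = 1.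
  rewrite /qmultinom /= big1_eq qfact0 big1_eq divr1 mul1r.
  by rewrite big1 ?expr0 ?invr1 // => r _; rewrite big1.
by case: star_is => _ _ _ -> _; rewrite mulr1 scale1r.
Qed.

Lemma sphere_sumS M N : (N < M)%N ->
  sphere_sum q star z M N = sphere_sum q star z M N.+1.
Proof.
move=> NM; rewrite /sphere_sum.
have W_expand := zmon_star_expand (lt0r_neq0 q_gt0) star_is z_qcomm sum_zzstar.
under eq_bigr => j _ do rewrite W_expand scaler_sumr.
rewrite exchange_big /=.
under [RHS]eq_bigr => m /eqP m_sum.
  rewrite (qmultinom_rec q_gt0 q_lt1); last by rewrite m_sum.
  rewrite scaler_suml big_mkcond /=.
over.
rewrite [RHS]exchange_big /=; apply: eq_bigr => i _.
rewrite -big_mkcondr /= sum_ffun_incr //; apply: eq_bigr => j /eqP j_sum.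
have ji_lt : (j i < M)%N.
  by apply: leq_ltn_trans NM; rewrite -j_sum (leq_term_sum (fun k => j k : nat)).
have decr_incr : decr_at (fun k => ffun_incr j i k : nat) i =1 (fun k => j k : nat).
  by move=> k; rewrite /decr_at ffun_incrE // -/(decr_at _ i k) decr_incr_at.
rewrite (eq_qmultinom q decr_incr) (eq_zmon z (ffun_incrE ji_lt)).
rewrite (eq_bigr _ (fun k _ => ffun_incrE ji_lt k)) sum_cond_incr_at ?ltnn //.
by rewrite scalerA.
Qed.

End SphereSum.

Theorem lemma4p2 (R : realFieldType) (q : R) (hq0 : 0 < q) (hq1 : q < 1)
    (l : nat) (hl : (1 <= l)%N) (A : algType R) (star : A -> A)
    (z : 'I_l.+1 -> A) (hstar : is_star star) (hrel : qsphere_rel q star z)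
    (N : nat) :
  \sum_(j : {ffun 'I_l.+1 -> 'I_N.+1} | (\sum_(i < l.+1) (j i : nat))%N == N)
     qmultinom q (fun i => (j i : nat)) *:
       (zmon z (fun i => (j i : nat)) * star (zmon z (fun i => (j i : nat))))
  = 1.
Proof.
case: hrel => z_qcomm _ _ _ sum_zzstar.
have sum_le K : (K <= N)%N -> sphere_sum q star z N K = 1.
  elim: K => [|K IH] K_le; first exact: sphere_sum0.
  by rewrite -(sphere_sumS hq0 hq1 hstar z_qcomm sum_zzstar) // IH // ltnW.
exact: sum_le.
Qed.
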